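(* Let $K$ be a field and $P$ an arbitrary poset. The quotient algebra $FI(P)/\mathrm{Rad}\,FI(P)$ is commutative, where $\mathrm{Rad}$ denotes the Jacobson radical.
   Context: $K$ is a field, $P$ an arbitrary poset. $I(P)$ is the set of functions $\alpha$ assigning to each pair $x\le y$ in $P$ a value $\alpha(x,y)\in K$. An element $\alpha\in I(P)$ is a finitary series if for all $x<y$ in $P$ there are only finitely many pairs $(u,v)$ with $x\le u<v\le y$ and $\alpha(u,v)\neq0$; $FI(P)$ is the set of finitary series. $FI(P)$ is an associative $K$-algebra under pointwise addition and convolution $(\alpha\beta)(x,y)=\sum_{x\le z\le y}\alpha(x,z)\beta(z,y)$. *)

From HB Require Import structures.
From mathcomp Require Import all_boot all_order all_algebra.
From Stdlib Require Import ClassicalEpsilon.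
Set Implicit Arguments. Unset Strict Implicit. Unset Printing Implicit Defensive.
Import Order.Theory GRing.Theory.
Local Open Scope ring_scope.

(* Elements of I(P) are represented by functions P -> P -> K that vanish
   outside the pairs x <= y (so that equality of functions is equality in I(P)). *)

Definition is_incidence {d : Order.disp_t} {P : porderType d} {K : fieldType}
  (a : P -> P -> K) : Prop :=
  forall x y : P, ~~ (x <= y)%O -> a x y = 0.

Definition is_finitary {d : Order.disp_t} {P : porderType d} {K : fieldType}
  (a : P -> P -> K) : Prop :=
  is_incidence a /\
  forall x y : P, (x < y)%O ->
    exists s : seq (P * P), forall u v : P,
      (x <= u)%O -> (u < v)%O -> (v <= y)%O -> a u v != 0 -> (u, v) \in s.

Definition FI {d : Order.disp_t} {P : porderType d} {K : fieldType}
  (a : P -> P -> K) : Prop := is_finitary a.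

Definition fi_zero {d : Order.disp_t} {P : porderType d} {K : fieldType} :
  P -> P -> K := fun _ _ => 0.

Definition fi_sub {d : Order.disp_t} {P : porderType d} {K : fieldType}
  (a b : P -> P -> K) : P -> P -> K := fun x y => a x y - b x y.

Definition conv_supp {d : Order.disp_t} {P : porderType d} {K : fieldType}
  (a b : P -> P -> K) (x y z : P) : bool :=
  (x <= z)%O && (z <= y)%O && (a x z * b z y != 0).

(* convolution (a b)(x,y) = sum_{x <= z <= y} a(x,z) b(z,y), computed as the
   sum over the (finite, for finitary a b) set of z giving nonzero terms;
   it is 0 when that set is infinite (never happens on FI(P)). *)
Definition conv {d : Order.disp_t} {P : porderType d} {K : fieldType}
  (a b : P -> P -> K) : P -> P -> K := fun x y =>
  match excluded_middle_informative
          (exists s : seq P, uniq s /\ forall z, (z \in s) = conv_supp a b x y z)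
  with
  | left H => \sum_(z <- proj1_sig (constructive_indefinite_description _ H))
                 a x z * b z y
  | right _ => 0
  end.

Definition left_ideal {d : Order.disp_t} {P : porderType d} {K : fieldType}
  (I : (P -> P -> K) -> Prop) : Prop :=
  (forall a, I a -> FI a) /\
  I fi_zero /\
  (forall a b, I a -> I b -> I (fi_sub a b)) /\
  (forall r a, FI r -> I a -> I (conv r a)).

Definition maximal_left_ideal {d : Order.disp_t} {P : porderType d} {K : fieldType}
  (M : (P -> P -> K) -> Prop) : Prop :=
  left_ideal M /\
  (exists a, FI a /\ ~ M a) /\
  (forall J : (P -> P -> K) -> Prop, left_ideal J -> (forall a, M a -> J a) ->
     (forall a, J a -> M a) \/ (forall a, FI a -> J a)).

Definition jacobson_radical {d : Order.disp_t} {P : porderType d} {K : fieldType}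
  (a : P -> P -> K) : Prop :=
  FI a /\ forall M : (P -> P -> K) -> Prop, maximal_left_ideal M -> M a.

Set Warnings "-notation-overridden,-ambiguous-paths".
From HB Require Import structures.
From mathcomp Require Import all_boot all_order all_algebra.
From Stdlib Require Import ClassicalEpsilon Classical FunctionalExtensionality.
Set Implicit Arguments. Unset Strict Implicit. Unset Printing Implicit Defensive.
Import Order.Theory GRing.Theory.
Local Open Scope ring_scope.

(* The diagonal map a |-> (a(x,x))_x is multiplicative on FI(P), so every
   commutator ab - ba has zero diagonal; it therefore suffices to show that
   every finitary series c with zero diagonal lies in each maximal left ideal M.
   If c were not in M, maximality would give M + FI(P)c = FI(P), hence
   1 - v in M with v = rc of zero diagonal.  Such a v is "locally nilpotent":
   on an interval [x,y] its powers vanish beyond the number of points carrying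
   its support, so the geometric series w = sum_k v^k is a finitary series with
   w(1 - v) = 1.  Then 1 in M, contradicting properness. *)

Section FinitarySeries.
Variables (d : Order.disp_t) (P : porderType d) (K : fieldType).
Implicit Types a b c r v : P -> P -> K.

Local Notation fext := (fun H => functional_extensionality _ _
  (fun x => functional_extensionality _ _ (H x))).

Lemma mulf_neq0_and (u u' : K) : u * u' != 0 -> (u != 0) && (u' != 0).
Proof. by rewrite mulf_eq0 negb_or. Qed.

Lemma conv_nz a b x y : conv a b x y != 0 -> exists z, conv_supp a b x y z.
Proof.
rewrite /conv; case: excluded_middle_informative => [H|]; last by rewrite eqxx.
case: (constructive_indefinite_description _ H) => t /= [Ut Ht].
case: t Ut Ht => [|z t] Ut Ht; first by rewrite big_nil eqxx.
by move=> _; exists z; rewrite -Ht mem_head.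
Qed.

Lemma conv_sum a b x y (S : seq P) : is_incidence a -> is_incidence b -> uniq S ->
  (forall z, (x <= z)%O -> (z <= y)%O -> a x z * b z y != 0 -> z \in S) ->
  conv a b x y = \sum_(z <- S) a x z * b z y.
Proof.
move=> Ia Ib US HS.
have inS z : conv_supp a b x y z -> z \in S.
  by case/andP=> /andP[xz zy]; apply: HS.
have Hex : exists s : seq P, uniq s /\ forall z, (z \in s) = conv_supp a b x y z.
  exists (filter (conv_supp a b x y) S); split; first exact: filter_uniq.
  by move=> z; rewrite mem_filter andb_idr //; apply: inS.
rewrite /conv; case: excluded_middle_informative => [H|//].
case: (constructive_indefinite_description _ H) => t /= [Ut Ht].
rewrite [RHS](bigID (conv_supp a b x y)) /= [X in _ = _ + X]big1; last first.
  move=> z; rewrite /conv_supp.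
  case/boolP: (x <= z)%O => [xz|xz] /=; last by rewrite (Ia _ _ xz) mul0r.
  case/boolP: (z <= y)%O => [zy|zy] /=; last by rewrite (Ib _ _ zy) mulr0.
  by rewrite negbK => /eqP.
rewrite addr0 -[RHS]big_filter; apply: perm_big; apply: uniq_perm => //.
  exact: filter_uniq.
by move=> z; rewrite mem_filter Ht andb_idr //; apply: inS.
Qed.

Lemma incidence_conv a b : is_incidence (conv a b).
Proof.
move=> x y nxy; apply/eqP; apply: contraT => /conv_nz [z].
by case/andP=> /andP[xz zy] _; move: nxy; rewrite (le_trans xz zy).
Qed.

Lemma incidence_FI a : FI a -> is_incidence a.
Proof. by case. Qed.

Definition covers a x y (S : seq P) := forall u w, (x <= u)%O -> (u < w)%O ->
  (w <= y)%O -> a u w != 0 -> (u \in S) && (w \in S).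

Lemma cover_ex a : FI a -> forall x y, exists S, covers a x y S.
Proof.
move=> [Ia Fa] x y; case/boolP: (x < y)%O => xy.
  have [s Hs] := Fa x y xy.
  exists (map fst s ++ map snd s) => u w xu uw wy nz.
  have us := Hs u w xu uw wy nz.
  by rewrite !mem_cat (map_f fst us) (map_f snd us) orbT.
exists [::] => u w xu uw wy _; exfalso.
by move: xy; rewrite (le_lt_trans xu (lt_le_trans uw wy)).
Qed.

Lemma FI_of_cover a : is_incidence a ->
  (forall x y, (x < y)%O -> exists S, covers a x y S) -> FI a.
Proof.
move=> Ia H; split => // x y xy; have [S HS] := H x y xy.
exists [seq (u, w) | u <- S, w <- S] => u w xu uw wy nz.
by case/andP: (HS u w xu uw wy nz) => uS wS; apply: allpairs_f.
Qed.

Lemma row_of_cover a x y S : covers a x y S ->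
  forall z, (x <= z)%O -> (z <= y)%O -> a x z != 0 -> z \in x :: S.
Proof.
move=> H z xz zy nz; rewrite in_cons; move: (xz).
rewrite le_eqVlt => /orP[/eqP->|xz']; first by rewrite eqxx.
by case/andP: (H x z (lexx x) xz' zy nz) => _ ->; rewrite orbT.
Qed.

Definition fi_one : P -> P -> K := fun x y => if x == y then 1 else 0.

Lemma FI_zero : FI (@fi_zero d P K).
Proof. by apply: FI_of_cover => // x y _; exists [::] => u w; rewrite eqxx. Qed.

Lemma FI_one : FI fi_one.
Proof.
apply: FI_of_cover => [x y|x y _].
  by rewrite /fi_one; case: eqP => // ->; rewrite lexx.
by exists [::] => u w _ uw _; rewrite /fi_one (lt_eqF uw) eqxx.
Qed.

Lemma incidence_one : is_incidence fi_one.
Proof. exact: incidence_FI FI_one. Qed.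

Lemma FI_sub a b : FI a -> FI b -> FI (fi_sub a b).
Proof.
move=> Fa Fb; apply: FI_of_cover => [x y nxy|x y _].
  by rewrite /fi_sub (incidence_FI Fa) ?(incidence_FI Fb) ?subr0.
have [Sa Ha] := cover_ex Fa x y; have [Sb Hb] := cover_ex Fb x y.
exists (Sa ++ Sb) => u w xu uw wy; rewrite /fi_sub !mem_cat.
case/boolP: (a u w == 0) => [/eqP ->|na] nz.
  have nb : b u w != 0 by move: nz; rewrite sub0r oppr_eq0.
  by case/andP: (Hb u w xu uw wy nb) => -> ->; rewrite !orbT.
by case/andP: (Ha u w xu uw wy na) => -> ->.
Qed.

Lemma FI_conv a b : FI a -> FI b -> FI (conv a b).
Proof.
move=> Fa Fb; apply: FI_of_cover => [|x y _]; first exact: incidence_conv.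
have [Sa Ha] := cover_ex Fa x y; have [Sb Hb] := cover_ex Fb x y.
exists (Sa ++ Sb) => u w xu uw wy /conv_nz [z].
case/andP=> /andP[uz zw] /mulf_neq0_and /andP[na nb]; rewrite !mem_cat.
move: uz; rewrite le_eqVlt => /orP[/eqP E|uz].
  by subst z; case/andP: (Hb u w xu uw wy nb) => -> ->; rewrite !orbT.
have xz : (x <= z)%O := le_trans xu (ltW uz).
case/andP: (Ha u z xu uz (le_trans zw wy) na) => -> zS /=.
move: zw; rewrite le_eqVlt => /orP[/eqP E|zw]; first by subst z; rewrite zS.
by case/andP: (Hb z w xz zw wy nb) => _ ->; rewrite orbT.
Qed.

Lemma fi_sub0 a : fi_sub a fi_zero = a.
Proof. by apply: fext => x y; rewrite /fi_sub /fi_zero subr0. Qed.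

Lemma fi_subv a : fi_sub a a = fi_zero.
Proof. by apply: fext => x y; rewrite /fi_sub /fi_zero subrr. Qed.

Lemma conv_0l c : conv fi_zero c = @fi_zero d P K.
Proof.
apply: fext => x y; apply/eqP; apply: contraT => /conv_nz [z].
by rewrite /conv_supp /fi_zero mul0r eqxx andbF.
Qed.

Lemma conv_1l c : is_incidence c -> conv fi_one c = c.
Proof.
move=> Ic; apply: fext => x y.
rewrite (conv_sum (S := [:: x]) incidence_one Ic) //.
  by rewrite big_seq1 /fi_one eqxx mul1r.
move=> z _ _ /mulf_neq0_and /andP[]; rewrite /fi_one.
by case: ifP => [/eqP ->|_]; rewrite ?mem_head ?eqxx.
Qed.

Lemma conv_1r a : is_incidence a -> conv a fi_one = a.
Proof.
move=> Ia; apply: fext => x y.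
rewrite (conv_sum (S := [:: y]) Ia incidence_one) //.
  by rewrite big_seq1 /fi_one eqxx mulr1.
move=> z _ _ /mulf_neq0_and /andP[_]; rewrite /fi_one.
by case: ifP => [/eqP ->|_]; rewrite ?mem_head ?eqxx.
Qed.

Lemma in_rows x (S1 S2 : seq P) z :
  (z \in x :: S1) || (z \in x :: S2) -> z \in undup (x :: S1 ++ S2).
Proof. by rewrite mem_undup !in_cons mem_cat; case: (z == x). Qed.

Lemma conv_subl r1 r2 c : FI r1 -> FI r2 -> FI c ->
  conv (fi_sub r1 r2) c = fi_sub (conv r1 c) (conv r2 c).
Proof.
move=> F1 F2 Fc; apply: fext => x y.
have [C1 H1] := cover_ex F1 x y; have [C2 H2] := cover_ex F2 x y.
have Ic := incidence_FI Fc; have US := undup_uniq (x :: C1 ++ C2).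
rewrite /fi_sub (conv_sum (incidence_FI (FI_sub F1 F2)) Ic US).
rewrite (conv_sum (incidence_FI F1) Ic US).
rewrite (conv_sum (incidence_FI F2) Ic US).
- by rewrite -sumrB; apply: eq_bigr => z _; rewrite mulrBl.
- move=> z xz zy /mulf_neq0_and /andP[nz _].
  by apply: in_rows; rewrite (row_of_cover H2 xz zy nz) orbT.
- move=> z xz zy /mulf_neq0_and /andP[nz _].
  by apply: in_rows; rewrite (row_of_cover H1 xz zy nz).
- move=> z xz zy /mulf_neq0_and /andP[nz _]; apply: in_rows.
  case/boolP: (r1 x z == 0) => [/eqP E|n1]; last by rewrite (row_of_cover H1 xz zy n1).
  have n2 : r2 x z != 0 by move: nz; rewrite /fi_sub E sub0r oppr_eq0.
  by rewrite (row_of_cover H2 xz zy n2) orbT.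
Qed.

Lemma conv_subr r a b : FI r -> FI a -> FI b ->
  conv r (fi_sub a b) = fi_sub (conv r a) (conv r b).
Proof.
move=> Fr Fa Fb; apply: fext => x y.
have [C HC] := cover_ex Fr x y; have US := undup_uniq (x :: C).
have rowS g z : (x <= z)%O -> (z <= y)%O -> r x z * g z y != 0 -> z \in undup (x :: C).
  by move=> xz zy /mulf_neq0_and /andP[nz _]; rewrite mem_undup (row_of_cover HC xz zy nz).
have Ir := incidence_FI Fr.
rewrite /fi_sub (conv_sum Ir (incidence_FI (FI_sub Fa Fb)) US (rowS _)).
rewrite (conv_sum Ir (incidence_FI Fa) US (rowS _)) (conv_sum Ir (incidence_FI Fb) US (rowS _)).
by rewrite -sumrB; apply: eq_bigr => z _; rewrite mulrBr.
Qed.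

Lemma conv_assoc r' r c : FI r' -> FI r -> FI c ->
  conv r' (conv r c) = conv (conv r' r) c.
Proof.
move=> F1 F2 F3; apply: fext => x y.
have [C1 H1] := cover_ex F1 x y; have [C2 H2] := cover_ex F2 x y.
have I1 := incidence_FI F1; have I2 := incidence_FI F2; have I3 := incidence_FI F3.
set S := undup (x :: C1 ++ C2); have US : uniq S := undup_uniq _.
have inS1 z : z \in x :: C1 -> z \in S by move=> zC; apply: in_rows; rewrite zC.
have inS2 z : z \in C2 -> z \in S.
  by move=> zC; apply: in_rows; rewrite !in_cons zC !orbT.
have row2 z w : (x <= z)%O -> (z <= w)%O -> (w <= y)%O -> r z w != 0 -> (z == w) || (w \in S).
  move=> xz zw wy nz; move: zw; rewrite le_eqVlt => /orP[->//|zw].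
  by case/andP: (H2 z w xz zw wy nz) => _ /inS2 ->; rewrite orbT.
rewrite (conv_sum I1 (incidence_conv r c) US); last first.
  by move=> z xz zy /mulf_neq0_and /andP[nz _]; apply/inS1/(row_of_cover H1 xz zy nz).
rewrite [RHS](conv_sum (incidence_conv r' r) I3 US); last first.
  move=> w xw wy /mulf_neq0_and /andP[/conv_nz [z] + _].
  case/andP=> /andP[xz zw] /mulf_neq0_and /andP[n1 n2].
  case/orP: (row2 z w xz zw wy n2) => [/eqP E|//].
  by subst z; apply/inS1/(row_of_cover H1 xz wy n1).
have -> : \sum_(z <- S) r' x z * conv r c z y =
          \sum_(z <- S) \sum_(w <- S) r' x z * r z w * c w y.
  apply: eq_big_seq => z zS; case/boolP: (x <= z)%O => xz; last first.
    by rewrite (I1 _ _ xz) mul0r big1 // => w _; rewrite !mul0r.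
  rewrite (conv_sum I2 I3 US) ?mulr_sumr; first by apply: eq_bigr => w _; rewrite mulrA.
  move=> w zw wy /mulf_neq0_and /andP[n2 _].
  by case/orP: (row2 z w xz zw wy n2) => [/eqP <-|].
rewrite exchange_big /=; apply: eq_bigr => w _.
case/boolP: (w <= y)%O => wy; last first.
  by rewrite (I3 _ _ wy) mulr0 big1 // => z _; rewrite mulr0.
rewrite (conv_sum I1 I2 US) ?mulr_suml //.
move=> z xz zw /mulf_neq0_and /andP[n1 _].
by apply/inS1/(row_of_cover H1 xz (le_trans zw wy) n1).
Qed.

Lemma conv_diag a b x : is_incidence a -> is_incidence b ->
  conv a b x x = a x x * b x x.
Proof.
move=> Ia Ib; rewrite (conv_sum (S := [:: x]) Ia Ib) ?big_seq1 //.
by move=> z xz zx _; rewrite (@le_anti _ _ z x) ?mem_head // zx xz.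
Qed.

Fixpoint fpow v k : P -> P -> K := if k is k'.+1 then conv (fpow v k') v else fi_one.

Lemma FI_pow v k : FI v -> FI (fpow v k).
Proof. by move=> Fv; elim: k => [|k IH] /=; [exact: FI_one | exact: FI_conv]. Qed.

Lemma count_lt (T : Type) (p q : pred T) (s : seq T) :
  (forall z, p z -> q z) -> has (fun z => q z && ~~ p z) s -> (count p s < count q s)%N.
Proof.
move=> pq; elim: s => [//|h s IH] /=; case/orP => [/andP[qh nph]|Hs].
  by rewrite qh (negbTE nph) /= ltnS; apply: sub_count => z; apply: pq.
have := IH Hs; case: (p h) (pq h) => [qh'|_] /= H; first by rewrite (qh' isT) ltn_add2l.
by apply: leq_trans H _; apply: leq_addl.
Qed.

Lemma trunc_sum (f : nat -> K) n m : (forall k, (n <= k)%N -> f k = 0) ->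
  (forall k, (m <= k)%N -> f k = 0) ->
  \sum_(0 <= k < n) f k = \sum_(0 <= k < m) f k.
Proof.
wlog nm : n m / (n <= m)%N.
  move=> W Hn Hm; case/orP: (leq_total n m) => H; first exact: W.
  by symmetry; apply: W.
move=> Hn _; rewrite (@big_cat_nat _ _ _ n 0 m) // /= [X in _ = _ + X]big_nat_cond.
by rewrite [X in _ = _ + X]big1 ?addr0 // => k /andP[/andP[nk _] _]; apply: Hn.
Qed.

Lemma sum_nz (I : Type) (s : seq I) (F : I -> K) :
  \sum_(i <- s) F i != 0 -> exists i, F i != 0.
Proof.
move=> H; apply: NNPP => Hn; move/eqP: H; apply; apply: big1 => i _.
by apply/eqP; apply: contraT => Hi; case: Hn; exists i.
Qed.

Section GeometricSeries.
Variable v : P -> P -> K.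
Hypothesis Fv : FI v.
Hypothesis v_diag0 : forall x, v x x = 0.

Lemma supp_v_lt z w : (z <= w)%O -> v z w != 0 -> (z < w)%O.
Proof. by rewrite le_eqVlt => /orP[/eqP->|//]; rewrite v_diag0 eqxx. Qed.

Lemma pow_covers x y S k : covers v x y S -> covers (fpow v k) x y S.
Proof.
move=> HS; elim: k => [|k IH] u w xu uw wy /=; first by rewrite /fi_one (lt_eqF uw) eqxx.
move=> /conv_nz [z] /andP[/andP[uz zw] /mulf_neq0_and /andP[nk nv]].
have zw' := supp_v_lt zw nv; have xz : (x <= z)%O := le_trans xu uz.
case/andP: (HS z w xz zw' wy nv) => zS ->; rewrite andbT.
move: uz; rewrite le_eqVlt => /orP[/eqP->//|uz].
by case/andP: (IH u z xu uz (le_trans zw wy) nk).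
Qed.

(* A nonzero entry v^k(x,w) comes from a chain x = z_0 < ... < z_k = w of
   support points, so k is at most the number of cover points in [x,w). *)
Lemma pow_count x y S : covers v x y S -> forall k w, (x <= w)%O -> (w <= y)%O ->
  fpow v k x w != 0 -> (k <= count (fun z => (x <= z)%O && (z < w)%O) S)%N.
Proof.
move=> HS; elim=> [//|k IH] w xw wy /=.
move=> /conv_nz [z] /andP[/andP[xz zw] /mulf_neq0_and /andP[nk nv]].
have zw' := supp_v_lt zw nv.
apply: leq_ltn_trans (IH z xz (le_trans zw wy) nk) _; apply: count_lt.
  by move=> t /andP[-> tz]; rewrite (lt_trans tz zw').
apply/hasP; exists z; first by case/andP: (HS z w xz zw' wy nv).
by rewrite xz zw' ltxx.
Qed.

Lemma pow_vanish x y : exists n, forall k w, (w <= y)%O -> (n <= k)%N -> fpow v k x w = 0.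
Proof.
have [S HS] := cover_ex Fv x y; exists (size S).+1 => k w wy Hk.
case/boolP: (x <= w)%O => xw; last by rewrite (incidence_FI (FI_pow k Fv) xw).
apply/eqP; apply: contraT => nz.
by have := leq_trans (pow_count HS xw wy nz) (count_size _ _); rewrite leqNgt Hk.
Qed.

Definition geom : P -> P -> K := fun x y =>
  let n := proj1_sig (constructive_indefinite_description _ (pow_vanish x y)) in
  \sum_(0 <= k < n) fpow v k x y.

Lemma geom_eq x y m : (forall k, (m <= k)%N -> fpow v k x y = 0) ->
  geom x y = \sum_(0 <= k < m) fpow v k x y.
Proof.
rewrite /geom; case: constructive_indefinite_description => n Hn /= Hm.
by apply: trunc_sum => // k; apply: Hn.
Qed.

Lemma incidence_geom : is_incidence geom.
Proof.
by move=> x y nxy; rewrite /geom big1 // => k _; apply: (incidence_FI (FI_pow k Fv)).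
Qed.

Lemma FI_geom : FI geom.
Proof.
apply: FI_of_cover => [|x y _]; first exact: incidence_geom.
have [S HS] := cover_ex Fv x y; exists S => u w xu uw wy.
by rewrite /geom => /sum_nz [k]; apply: (pow_covers (k := k) HS xu uw wy).
Qed.

Lemma conv_geom : conv geom v = fi_sub geom fi_one.
Proof.
apply: fext => x y; have [m Hm] := pow_vanish x y.
have [C HC] := cover_ex Fv x y; have US := undup_uniq (x :: C).
have Iv := incidence_FI Fv.
have rowS k z : (x <= z)%O -> (z <= y)%O -> fpow v k x z != 0 -> z \in undup (x :: C).
  by move=> xz zy nz; rewrite mem_undup (row_of_cover (pow_covers (k := k) HC) xz zy nz).
rewrite (conv_sum incidence_geom Iv US); last first.
  by move=> z xz zy /mulf_neq0_and /andP[/sum_nz [k nz] _]; apply: (rowS k).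
have -> : \sum_(z <- undup (x :: C)) geom x z * v z y =
          \sum_(z <- undup (x :: C)) \sum_(0 <= k < m) fpow v k x z * v z y.
  apply: eq_bigr => z _; case/boolP: (z <= y)%O => zy; last first.
    by rewrite (Iv _ _ zy) mulr0 big1 // => k _; rewrite mulr0.
  by rewrite (geom_eq (fun k => Hm k z zy)) mulr_suml.
rewrite exchange_big /=.
have -> : \sum_(0 <= k < m) \sum_(z <- undup (x :: C)) fpow v k x z * v z y =
          \sum_(0 <= k < m) fpow v k.+1 x y.
  apply: eq_bigr => k _ /=; rewrite (conv_sum (incidence_FI (FI_pow k Fv)) Iv US) //.
  by move=> z xz zy /mulf_neq0_and /andP[nz _]; apply: (rowS k).
rewrite /fi_sub (@geom_eq x y m.+1); last by move=> k mk; apply: Hm => //; apply: ltnW.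
by rewrite [in RHS]big_nat_recl //= (addrC (fi_one x y)) addrK.
Qed.

Lemma geom_left_inverse : conv geom (fi_sub fi_one v) = fi_one.
Proof.
rewrite (conv_subr FI_geom FI_one Fv) conv_geom (conv_1r incidence_geom).
by apply: fext => x y; rewrite /fi_sub opprB addrC subrK.
Qed.

End GeometricSeries.

Lemma left_ideal_one_full (M : (P -> P -> K) -> Prop) :
  left_ideal M -> M fi_one -> forall a, FI a -> M a.
Proof.
move=> [_ [_ [_ Mmul]]] M1 a Fa.
by rewrite -(conv_1r (incidence_FI Fa)); apply: Mmul.
Qed.

Lemma left_ideal_one_sub (M : (P -> P -> K) -> Prop) v :
  left_ideal M -> FI v -> (forall x, v x x = 0) -> M (fi_sub fi_one v) -> M fi_one.
Proof.
move=> [_ [_ [_ Mmul]]] Fv v0 Mv.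
by rewrite -(geom_left_inverse Fv v0); apply: Mmul => //; apply: FI_geom.
Qed.

Definition add_multiples (M : (P -> P -> K) -> Prop) c (w : P -> P -> K) : Prop :=
  FI w /\ exists r, FI r /\ M (fi_sub w (conv r c)).

Lemma add_multiples_sub (M : (P -> P -> K) -> Prop) c w :
  left_ideal M -> M w -> add_multiples M c w.
Proof.
move=> [MFI _] Mw; split; first exact: MFI.
by exists fi_zero; rewrite conv_0l fi_sub0; split; [exact: FI_zero|].
Qed.

Lemma add_multiples_gen (M : (P -> P -> K) -> Prop) c :
  left_ideal M -> FI c -> add_multiples M c c.
Proof.
move=> [_ [M0 _]] Fc; split => //; exists fi_one; split; first exact: FI_one.
by rewrite (conv_1l (incidence_FI Fc)) fi_subv.
Qed.

Lemma left_ideal_add_multiples (M : (P -> P -> K) -> Prop) c :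
  left_ideal M -> FI c -> left_ideal (add_multiples M c).
Proof.
move=> LM Fc; have [_ [M0 [Msub Mmul]]] := LM.
split; first by move=> w [].
split; first exact: add_multiples_sub.
split.
  move=> w1 w2 [F1 [r1 [Fr1 M1]]] [F2 [r2 [Fr2 M2]]].
  split; first exact: FI_sub.
  exists (fi_sub r1 r2); split; first exact: FI_sub.
  have -> : fi_sub (fi_sub w1 w2) (conv (fi_sub r1 r2) c) =
            fi_sub (fi_sub w1 (conv r1 c)) (fi_sub w2 (conv r2 c)).
    rewrite conv_subl //; apply: fext => x y; rewrite /fi_sub.
    by rewrite !opprB addrACA [RHS]addrACA (addrC (- w2 _ _)).
  exact: Msub.
move=> s w Fs [Fw [r [Fr Mw]]]; split; first exact: FI_conv.
exists (conv s r); split; first exact: FI_conv.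
by rewrite -conv_assoc // -conv_subr //; [apply: Mmul | apply: FI_conv].
Qed.

(* Finitary series with zero diagonal lie in the Jacobson radical: otherwise
   M + FI(P) c = FI(P) for a maximal left ideal M, so 1 - rc in M, whence 1 in M. *)
Lemma zero_diag_radical c : FI c -> (forall x, c x x = 0) -> jacobson_radical c.
Proof.
move=> Fc c0; split => // M [LM [[a [Fa nMa]] Mmax]].
apply: NNPP => nMc.
have [JM|Jall] := Mmax _ (left_ideal_add_multiples LM Fc) (fun w => @add_multiples_sub M c w LM).
  by apply: nMc; apply: JM; apply: add_multiples_gen.
have [_ [r [Fr M1v]]] := Jall _ FI_one.
have rc0 x : conv r c x x = 0.
  by rewrite (conv_diag x (incidence_FI Fr) (incidence_FI Fc)) c0 mulr0.
apply: nMa; apply: left_ideal_one_full LM (left_ideal_one_sub LM _ rc0 M1v) _ Fa.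
exact: FI_conv.
Qed.

End FinitarySeries.

(* FI(P)/Rad FI(P) is commutative: every commutator ab - ba has zero diagonal
   and hence lies in the Jacobson radical. *)
Theorem corollary3 (d : Order.disp_t) (P : porderType d) (K : fieldType)
  (a b : P -> P -> K) :
  FI a -> FI b -> jacobson_radical (fi_sub (conv a b) (conv b a)).
Proof.
move=> Fa Fb; have [Ia Ib] := (incidence_FI Fa, incidence_FI Fb).
apply: zero_diag_radical; first by apply: FI_sub; apply: FI_conv.
by move=> x; rewrite /fi_sub !conv_diag // mulrC subrr.
Qed.
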